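(* Let $T$ be a tree of order $t\ge 2$ and let $\pi=(d_1,\dots,d_n)$ be a nonincreasing graphic sequence with $n\ge t$. If $d_{t-1}\ge t-1$, then $\pi$ is potentially $T$-graphic.
   Context: All graphs are finite and simple. A sequence of nonnegative integers $\pi=(d_1,\dots,d_n)$ with $d_1\ge d_2\ge\dots\ge d_n$ is graphic if some graph of order $n$ has degree sequence $\pi$; such a graph is a realization of $\pi$. For a graph $H$, a graphic sequence $\pi$ is potentially $H$-graphic if some realization of $\pi$ contains $H$ as a subgraph. *)

From mathcomp Require Import all_boot.
Set Implicit Arguments. Unset Strict Implicit. Unset Printing Implicit Defensive.

Definition simple_graph (V : finType) (e : rel V) : Prop :=
  symmetric e /\ irreflexive e.

Definition deg (V : finType) (e : rel V) (x : V) : nat := #|[pred y | e x y]|.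

Definition connected_graph (V : finType) (e : rel V) : Prop :=
  forall x y : V, connect e x y.

Definition acyclic (V : finType) (e : rel V) : Prop :=
  forall c : seq V, uniq c -> 3 <= size c -> ~~ cycle e c.

Definition is_tree (V : finType) (e : rel V) : Prop :=
  [/\ simple_graph e, connected_graph e & acyclic e].

(* e is a realization of d = (d_1,...,d_n): a simple graph on vertices
   0..n-1 where vertex i has degree d_(i+1). *)
Definition realization (d : seq nat) (e : rel 'I_(size d)) : Prop :=
  simple_graph e /\ forall i : 'I_(size d), deg e i = nth 0 d i.

Definition graphic (d : seq nat) : Prop :=
  exists e : rel 'I_(size d), realization e.

Definition contains_subgraph (VH VG : finType) (eH : rel VH) (eG : rel VG) : Prop :=
  exists f : VH -> VG, injective f /\ forall x y, eH x y -> eG (f x) (f y).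

Definition potentially_graphic (VH : finType) (eH : rel VH) (d : seq nat) : Prop :=
  graphic d /\ exists e : rel 'I_(size d), realization e /\ contains_subgraph eH e.

From mathcomp Require Import all_boot zify.

Set Implicit Arguments.
Unset Strict Implicit.
Unset Printing Implicit Defensive.

(* The tree is embedded greedily, one vertex at a time.  A vertex v of T outside
   the embedded part A has a unique neighbour p in A, since A is connected and
   T is acyclic, so v only needs an image adjacent to the image w of p.  The
   sortedness of d and d_(t-1) >= t-1 give t-1 vertices of degree at least t-1;
   images are chosen among them as long as a further vertex is to be attached.
   If no unused such vertex s is adjacent to w, take an unused neighbour x of w
   (deg w >= t-1 >= |A|), which has small degree, and a neighbour y of s not
   adjacent to x (deg s > deg x); the 2-switch trading wx, sy for ws, xy keeps
   all degrees and all edges among used vertices.  The last vertex only needs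
   any unused neighbour of w. *)

Lemma degE (V : finType) (e : rel V) z : deg e z = #|[set y | e z y]|.
Proof. by apply: eq_card => y; rewrite !inE. Qed.

Section SimpleGraph.

Variables (V : finType) (G : rel V).
Hypotheses (sG : symmetric G) (iG : irreflexive G).

Definition same_pair (u v a b : V) := ((u == a) && (v == b)) || ((u == b) && (v == a)).

Lemma same_pairC u v a b : same_pair u v a b = same_pair u v b a.
Proof. by rewrite /same_pair orbC. Qed.

Lemma same_pair_sym u v a b : same_pair u v a b = same_pair v u a b.
Proof. by rewrite /same_pair orbC andbC [(v == b) && _]andbC. Qed.

Lemma same_pairNa u v a b : u != a -> v != a -> same_pair u v a b = false.
Proof. by rewrite /same_pair => /negbTE-> /negbTE->; rewrite andbF. Qed.

Lemma same_pairNl u v a b : u != a -> u != b -> same_pair u v a b = false.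
Proof. by rewrite /same_pair => /negbTE-> /negbTE->. Qed.

Lemma same_pair_diag u a b : a != b -> same_pair u u a b = false.
Proof. by apply: contraNF => /orP[] /andP[/eqP <- /eqP <-]. Qed.

Definition switch (w x s y : V) : rel V :=
  fun u v => (G u v && ~~ same_pair u v w x && ~~ same_pair u v s y)
             || same_pair u v w s || same_pair u v x y.

Lemma switchC w x s y u v : switch w x s y u v = switch x w y s u v.
Proof. by rewrite /switch (same_pairC u v x w) (same_pairC u v y s) orbAC. Qed.

Lemma switch_swap w x s y u v : switch w x s y u v = switch s y w x u v.
Proof.
by rewrite /switch (same_pairC u v s w) (same_pairC u v y x) -andbA
  [~~ _ && _]andbC andbA.
Qed.

Lemma switch_at w x s y v : w != x -> w != s -> w != y ->
  switch w x s y w v = (G w v && (v != x)) || (v == s).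
Proof.
move=> /negbTE wx /negbTE ws /negbTE wy.
by rewrite /switch /same_pair eqxx wx ws wy /= ?andbF ?orbF ?andbT.
Qed.

Lemma switch_away w x s y z v : z != w -> z != x -> z != s -> z != y ->
  switch w x s y z v = G z v.
Proof.
move=> zw zx zs zy; rewrite /switch.
by rewrite !same_pairNl // !andbT !orbF.
Qed.

Lemma switch_keep w x s y a b : G a b -> a != x -> b != x -> a != s -> b != s ->
  switch w x s y a b.
Proof.
move=> Gab ax bx as_ bs; rewrite /switch (same_pairC a b w x).
by rewrite (same_pairNa _ ax bx) (same_pairNa _ as_ bs) Gab.
Qed.

Lemma switch_new w x s y : switch w x s y w s.
Proof. by rewrite /switch /same_pair !eqxx /= orbT. Qed.

Lemma switch_simple w x s y : w != s -> x != y -> simple_graph (switch w x s y).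
Proof.
move=> ws xy; split=> [u v|u].
  by rewrite /switch sG !(same_pair_sym u v).
by rewrite /switch iG (same_pair_diag _ ws) (same_pair_diag _ xy).
Qed.

Lemma deg_exchange (z a b : V) (H : rel V) :
  G z a -> ~~ G z b -> (forall v, H z v = (G z v && (v != a)) || (v == b)) ->
  deg H z = deg G z.
Proof.
move=> Gza Gzb Hz; rewrite !degE.
have -> : [set v | H z v] = b |: ([set v | G z v] :\ a).
  by apply/setP => v; rewrite !inE Hz orbC andbC.
by rewrite cardsU1 !inE (negbTE Gzb) andbF (cardsD1 a [set v | G z v]) inE Gza.
Qed.

Lemma deg_switch w x s y : G w x -> G s y -> ~~ G w s -> ~~ G x y ->
  w != s -> x != y -> forall z, deg (switch w x s y) z = deg G z.
Proof.
move=> Gwx Gsy Gws Gxy ws xy.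
have neq a b : G a b -> a != b by apply: contraTneq => ->; rewrite iG.
have wx := neq _ _ Gwx; have sy := neq _ _ Gsy.
have xs : x != s by apply: contraNneq Gws => <-.
have wy : w != y by apply: contraNneq Gws => ->; rewrite sG.
have Gxw : G x w by rewrite sG.
have Gys : G y s by rewrite sG.
have Gsw : ~~ G s w by rewrite sG.
have Gyx : ~~ G y x by rewrite sG.
move=> z; case: (eqVneq z w) => [->|zw].
  by apply: (deg_exchange Gwx Gws) => v; rewrite switch_at.
case: (eqVneq z x) => [->|zx].
  by apply: (deg_exchange Gxw Gxy) => v; rewrite switchC switch_at // eq_sym.
case: (eqVneq z s) => [->|zs].
  by apply: (deg_exchange Gsy Gsw) => v; rewrite switch_swap switch_at // eq_sym.
case: (eqVneq z y) => [->|zy].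
  by apply: (deg_exchange Gys Gyx) => v; rewrite switch_swap switchC switch_at // eq_sym.
by apply: eq_card => v; rewrite !inE switch_away.
Qed.

Lemma exists_fresh_neighbor (F : {set V}) w :
  w \in F -> #|F| <= deg G w -> exists2 u, G w u & u \notin F.
Proof.
move=> wF Fw; have : ~~ ([set v | G w v] \subset F :\ w).
  apply: contraL Fw => /subset_leq_card; rewrite -degE (cardsD1 w F) wF.
  by rewrite -ltnNge add1n ltnS.
case/subsetPn => u; rewrite !inE => Gwu /nandP[/negbNE/eqP uw|uF].
  by rewrite uw iG in Gwu.
by exists u.
Qed.

(* If every neighbour of s other than x were a neighbour of x, then deg s <= deg x. *)
Lemma exists_private_neighbor x s :
  deg G x < deg G s -> exists y, [/\ G s y, y != x & ~~ G x y].
Proof.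
move=> lt_xs; have : ~~ ([set v | G s v] :\ x \subset [set v | G x v] :\ s).
  apply: contraL lt_xs => /subset_leq_card le_xs; rewrite -leqNgt !degE.
  rewrite (cardsD1 x [set v | G s v]) (cardsD1 s [set v | G x v]) !inE (sG s x).
  by rewrite leq_add2l.
case/subsetPn => y; rewrite !inE => /andP[yx Gsy] /nandP[/negbNE/eqP ys|Gxy].
  by rewrite ys iG in Gsy.
by exists y.
Qed.

Lemma switch_to_high_neighbor (F : {set V}) w m :
  w \in F -> #|F| < m -> m <= deg G w -> m <= #|[set i | m <= deg G i]| ->
  exists H : rel V, exists2 u,
    [/\ simple_graph H, forall z, deg H z = deg G z, H w u, u \notin F & m <= deg G u]
    & {in F &, forall a b, G a b -> H a b}.
Proof.
move=> wF Fm mw mH.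
case: (pickP [pred u | [&& G w u, u \notin F & m <= deg G u]]) => [u /and3P[]|none].
  by exists G, u.
have [s] : exists2 s, s \in [set i | m <= deg G i] & s \notin F.
  by apply/subsetPn; apply: contraTN (leq_trans Fm mH) => /subset_leq_card; rewrite -ltnNge.
rewrite inE => ms sF.
have [x Gwx xF] := exists_fresh_neighbor wF (leq_trans (ltnW Fm) mw).
have xm : deg G x < m by rewrite ltnNge; move: (none x); rewrite /= Gwx xF => /negbT.
have Gws : ~~ G w s by apply/negP => Gws; have := none s; rewrite /= Gws sF ms.
have [y [Gsy yx Gxy]] := exists_private_neighbor (leq_trans xm ms).
have ws : w != s by apply: contraNneq sF => <-.
have xy : x != y by rewrite eq_sym.
exists (switch w x s y), s => [|a b aF bF Gab]; last first.
  have outF z c : z \notin F -> c \in F -> c != z.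
    by move=> zF cF; apply: contraNneq zF => <-.
  by apply: switch_keep; rewrite // ?(outF x) ?(outF s).
split=> //; [exact: switch_simple | exact: deg_switch | exact: switch_new].
Qed.

End SimpleGraph.

Lemma extend_realization (d : seq nat) (G : rel 'I_(size d)) (F : {set 'I_(size d)}) w m :
  realization G -> w \in F -> #|F| <= m -> m <= nth 0 d w ->
  m <= #|[set i : 'I_(size d) | m <= nth 0 d i]| ->
  exists H : rel 'I_(size d), exists2 u,
    [/\ realization H, H w u, u \notin F & #|F| < m -> m <= nth 0 d u]
    & {in F &, forall a b, G a b -> H a b}.
Proof.
move=> [[sG iG] degG] wF Fm mw mH; rewrite -degG in mw.
have [Fm'|mF] := ltnP #|F| m.
  have mH' : m <= #|[set i | m <= deg G i]|.
    by rewrite (_ : [set i | _] = [set i : 'I_(size d) | m <= nth 0 d i]) //;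
      apply/setP => i; rewrite !inE degG.
  have [H [u [sH degH Hwu uF mu] keep]] := switch_to_high_neighbor sG iG wF Fm' mw mH'.
  by exists H, u => //; split=> //; [split=> // i; rewrite degH | rewrite -degG].
have [u Gwu uF] := exists_fresh_neighbor iG wF (leq_trans Fm mw).
by exists G, u => //; split.
Qed.

Section TreeGrowth.

Variables (V : finType) (e : rel V).

Definition connected_in (A : {set V}) :=
  {in A &, forall p q, exists s, [/\ path e p s, last p s = q & {subset s <= A}]}.

Lemma path_exit_edge (A : {set V}) x s :
  x \in A -> path e x s -> last x s \notin A ->
  exists p v, [/\ p \in A, v \notin A & e p v].
Proof.
elim: s x => [|y s IH] x xA /=; first by rewrite xA.
case/andP=> exy pth lst; case yA: (y \in A); first exact: IH yA pth lst.
by exists x, y; rewrite yA.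
Qed.

(* A second neighbour q of v in A closes a cycle v p ... q v through a
   duplicate-free path from p to q inside A. *)
Lemma acyclic_unique_neighbor (A : {set V}) p q v :
  acyclic e -> connected_in A -> p \in A -> q \in A -> v \notin A ->
  e v p -> e q v -> q = p.
Proof.
move=> acyc connA pA qA vA evp eqv; apply/eqP; apply: contraT => qp.
have [s [pth lst sA]] := connA p q pA qA.
case: (shortenP pth) lst => s' pth' uniq' sub' lst'.
have vs : v \notin p :: s'.
  rewrite inE negb_or; apply/andP; split; first by apply: contraNneq vA => ->.
  by apply: contra vA => /sub' /sA.
have size_cycle : 3 <= size [:: v, p & s'].
  by case: s' {pth' uniq' sub' vs} lst' => //= pq; rewrite pq eqxx in qp.
have uniq_cycle : uniq [:: v, p & s'] by rewrite cons_uniq vs uniq'.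
by move: (acyc _ uniq_cycle size_cycle); rewrite /cycle /= evp rcons_path pth' /= lst' eqv.
Qed.

Lemma connected_in_setU1 (A : {set V}) p v :
  connected_in A -> p \in A -> e v p -> e p v -> connected_in (v |: A).
Proof.
move=> connA pA evp epv a b.
have AU : {subset A <= v |: A} by move=> z zA; rewrite inE zA orbT.
case/setU1P=> [->|aA]; case/setU1P=> [->|bA].
- by exists [::].
- have [s [pth lst sA]] := connA p b pA bA.
  exists (p :: s); split=> /=; [by rewrite evp | by [] |].
  by move=> z; rewrite inE => /predU1P[->|/sA]; apply: AU.
- have [s [pth lst sA]] := connA a p aA pA.
  exists (rcons s v); split; [by rewrite rcons_path pth lst epv | exact: last_rcons |].
  by move=> z; rewrite mem_rcons inE => /predU1P[->|/sA/AU //]; apply: setU11.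
- have [s [pth lst sA]] := connA a b aA bA.
  by exists s; split=> // z /sA /AU.
Qed.

Lemma tree_exit_edge (A : {set V}) a :
  is_tree e -> connected_in A -> a \in A -> #|A| < #|V| ->
  exists p v, [/\ p \in A, v \notin A, e p v & {in A, forall q, e q v -> q = p}].
Proof.
move=> [[sym _] conn acyc] connA aA ltA.
have [b _ bA] : exists2 b, b \in [set: V] & b \notin A.
  by apply/subsetPn; apply: contraTN ltA => /subset_leq_card; rewrite cardsT -leqNgt.
have /connectP [s pth lst] := conn a b.
rewrite lst in bA; have [p [v [pA vA epv]]] := path_exit_edge aA pth bA.
exists p, v; split=> // q qA eqv.
by apply: (acyclic_unique_neighbor acyc connA pA qA vA) => //; rewrite sym.
Qed.

End TreeGrowth.

(* The images of embedded vertices keep degree at least |T| - 1 until T is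
   fully embedded: this leaves room to attach the next vertex of T. *)
Definition partial_embedding (V : finType) (eT : rel V) (d : seq nat) (k : nat) :=
  exists (A : {set V}) (G : rel 'I_(size d)) (f : V -> 'I_(size d)),
  [/\ #|A| = k, realization G, connected_in eT A, {in A &, injective f}
    & {in A &, forall x y, eT x y -> G (f x) (f y)}
      /\ (k < #|V| -> {in A, forall x, #|V| - 1 <= nth 0 d (f x)})].

Lemma partial_embedding_one (V : finType) (eT : rel V) (d : seq nat) (a : V) (i : 'I_(size d)) :
  irreflexive eT -> graphic d -> #|V| - 1 <= nth 0 d i -> partial_embedding eT d 1.
Proof.
move=> irrT [G rG] high; exists [set a], G, (fun=> i); split.
- exact: cards1.
- by [].
- by move=> p q /set1P -> /set1P ->; exists [::].
- by move=> x y /set1P -> /set1P ->.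
- by split=> [x y /set1P -> /set1P ->|_ x _]; rewrite ?irrT.
Qed.

Lemma partial_embedding_succ (V : finType) (eT : rel V) (d : seq nat) k :
  is_tree eT -> #|V| - 1 <= #|[set i : 'I_(size d) | #|V| - 1 <= nth 0 d i]| ->
  0 < k -> k < #|V| -> partial_embedding eT d k -> partial_embedding eT d k.+1.
Proof.
move=> tree high k_gt0 kV [A [G [f [cardA rG connA injf [edgef highf]]]]].
have [a aA] : exists a, a \in A by apply/card_gt0P; rewrite cardA.
have ltA : #|A| < #|V| by rewrite cardA.
have [p [v [pA vA epv parent]]] := tree_exit_edge tree connA aA ltA.
have cardF : #|f @: A| = k by rewrite card_in_imset ?cardA.
have Fm : #|f @: A| <= #|V| - 1 by rewrite cardF; lia.
have [H [u [rH Hwu uF hu] keep]] :=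
  extend_realization rG (imset_f f pA) Fm (highf kV p pA) high.
pose g z := if z == v then u else f z.
have gA : {in A, g =1 f} by move=> z zA; rewrite /g; case: eqVneq zA vA => // -> ->.
have gv : g v = u by rewrite /g eqxx.
have [[symT _] _ _] := tree; have [[symH _] _] := rH.
have evp : eT v p by rewrite symT.
exists (v |: A), H, g; split=> //.
- by rewrite cardsU1 vA cardA.
- exact: connected_in_setU1 connA pA evp epv.
- move=> x y /setU1P[->|xA] /setU1P[->|yA] //; rewrite ?gv ?gA //.
  + by move=> uf; rewrite uf imset_f in uF.
  + by move=> fu; rewrite -fu imset_f in uF.
  + exact: injf.
split=> [x y /setU1P[->|xA] /setU1P[->|yA]|kV' x /setU1P[->|xA]].
- by case: tree => [[_ ->]].
- by rewrite symT => /(parent y yA) ->; rewrite gv gA // symH.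
- by move=> /(parent x xA) ->; rewrite gv gA.
- by rewrite !gA // => /(edgef x y xA yA); apply: keep; apply: imset_f.
- by rewrite gv; apply: hu; rewrite cardF; lia.
- by rewrite gA //; apply: highf => //; lia.
Qed.

Lemma sorted_geq_count (d : seq nat) k c :
  sorted geq d -> 0 < k <= size d -> c <= nth 0 d k.-1 ->
  k <= #|[set i : 'I_(size d) | c <= nth 0 d i]|.
Proof.
move=> srt /andP[k_gt0 kd] ck.
have geq_trans : transitive geq by move=> a b e /= ba eb; apply: leq_trans eb ba.
have sub : [set widen_ord kd i | i : 'I_k] \subset [set i : 'I_(size d) | c <= nth 0 d i].
  apply/subsetP => _ /imsetP[i _ ->]; rewrite inE /=; apply: leq_trans ck _.
  apply: (sorted_leq_nth geq_trans leqnn 0 srt); rewrite ?inE /=; have := ltn_ord i; lia.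
rewrite -[k in k <= _]card_ord -(card_imset _ (_ : injective (widen_ord kd))).
  exact: subset_leq_card sub.
by move=> i j [/val_inj].
Qed.

Lemma partial_embedding_upto (V : finType) (eT : rel V) (d : seq nat) k :
  is_tree eT -> #|V| - 1 <= #|[set i : 'I_(size d) | #|V| - 1 <= nth 0 d i]| ->
  partial_embedding eT d 1 -> 0 < k <= #|V| -> partial_embedding eT d k.
Proof.
move=> tree high emb1; elim: k => [|[|k] IH] // kV.
by apply: partial_embedding_succ => //; apply: IH; rewrite /= ltnW.
Qed.

Theorem lemma13 (V : finType) (eT : rel V) (d : seq nat) :
  is_tree eT -> 2 <= #|V| -> #|V| <= size d ->
  sorted geq d -> graphic d ->
  #|V| - 1 <= nth 0 d (#|V| - 2) ->
  potentially_graphic eT d.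
Proof.
move=> tree t_ge2 td srt gd hd.
have high : #|V| - 1 <= #|[set i : 'I_(size d) | #|V| - 1 <= nth 0 d i]|.
  by apply: sorted_geq_count => //; [lia | rewrite (_ : (#|V| - 1).-1 = #|V| - 2) //; lia].
have [i] : exists i, i \in [set i : 'I_(size d) | #|V| - 1 <= nth 0 d i].
  by apply/card_gt0P; apply: leq_trans high; lia.
rewrite inE => hi; have [a _] : exists a : V, a \in V by apply/card_gt0P; apply: ltnW.
have [[_ irrT] _ _] := tree.
have emb1 := partial_embedding_one a irrT gd hi.
have tV : 0 < #|V| <= #|V| by rewrite leqnn andbT; apply: ltnW.
have [A [G [f [cardA rG _ injf [edgef _]]]]] := partial_embedding_upto tree high emb1 tV.
have AT : A = setT by apply/eqP; rewrite eqEcard subsetT cardsT cardA; exact: leqnn.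
split=> //; exists G; split=> //; exists f.
by split=> x y; [apply: injf | apply: edgef]; rewrite AT inE.
Qed.
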